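(* Let $\Omega\subset\mathbb{R}^{n+m}$ be a bounded Lipschitz domain and $s\in(0,1)$. Let \[ R_s=\max_{(x,y)\in\Omega}\ \min_{(z,w)\in\partial\Omega}\left(|x-z|^s+|y-w|^s\right). \] Then $\Lambda_\infty(s)=\dfrac1{R_s}$.
   Context: Points of $\mathbb{R}^{n+m}$ are $(x,y)$, $x\in\mathbb{R}^n$, $y\in\mathbb{R}^m$. \[ [u]_{\mathcal W^{s,\infty}(\mathbb{R}^{n+m})}=\max\left\{\sup_{(x,y)\ne(z,y)}\frac{|u(x,y)-u(z,y)|}{|x-z|^s};\ \sup_{(x,y)\ne(x,w)}\frac{|u(x,y)-u(x,w)|}{|y-w|^s}\right\}, \] $\mathcal W^{s,\infty}(\mathbb{R}^{n+m})=\{u\in L^\infty(\mathbb{R}^{n+m}):[u]_{\mathcal W^{s,\infty}(\mathbb{R}^{n+m})}<\infty\}$, and $\Lambda_\infty(s)=\inf\{[u]_{\mathcal W^{s,\infty}(\mathbb{R}^{n+m})}: u\in\mathcal W^{s,\infty}(\mathbb{R}^{n+m}),\ \|u\|_{L^\infty(\Omega)}=1,\ u=0\text{ in }\mathbb{R}^{n+m}\setminus\Omega\}$. *)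

From HB Require Import structures.
From mathcomp Require Import all_boot all_order all_algebra.
From mathcomp Require Import all_classical all_reals all_analysis.
Set Implicit Arguments. Unset Strict Implicit. Unset Printing Implicit Defensive.
Import Order.TTheory GRing.Theory Num.Theory.
Import numFieldNormedType.Exports.
Local Open Scope classical_set_scope.
Local Open Scope ring_scope.

Section Defs.
Variable R : realType.

Definition edot (N : nat) (a b : 'rV[R]_N) : R := \sum_(i < N) a 0 i * b 0 i.
Definition enorm (N : nat) (a : 'rV[R]_N) : R := Num.sqrt (edot a a).

Definition bdry (N : nat) (O : set 'rV[R]_N) : set 'rV[R]_N :=
  closure O `\` interior O.

Definition ebounded (N : nat) (O : set 'rV[R]_N) : Prop :=
  exists M : R, forall p, O p -> enorm p <= M.

(* Bounded Lipschitz domain: nonempty, open, connected, bounded, and near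
   every boundary point p, in a ball B(p,r), O is the strict epigraph of a
   Lipschitz function over the hyperplane orthogonal to a unit vector e:
   O /\ B(p,r) = { q in B(p,r) | <q-p,e> > g(proj_{e^perp}(q-p)) }. *)
Definition lipschitz_domain (N : nat) (O : set 'rV[R]_N) : Prop :=
  [/\ O !=set0, open O, connected O, ebounded O &
   forall p, bdry O p ->
     exists (r : R) (e : 'rV[R]_N) (g : 'rV[R]_N -> R) (L : R),
       [/\ 0 < r, enorm e = 1,
           (forall a b, `|g a - g b| <= L * enorm (a - b)) &
           forall q, enorm (q - p) < r ->
             (O q <-> g ((q - p) - edot (q - p) e *: e) < edot (q - p) e)]].

Variables (n m : nat).

Definition pt (x : 'rV[R]_n) (y : 'rV[R]_m) : 'rV[R]_(n + m) := row_mx x y.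

Definition Wseminorm (s : R) (u : 'rV[R]_(n + m) -> R) : \bar R :=
  maxe
   (ereal_sup [set r | exists (x z : 'rV[R]_n) (y : 'rV[R]_m), x != z /\
       r = ((`|u (pt x y) - u (pt z y)|) / (enorm (x - z)) `^ s)%:E])
   (ereal_sup [set r | exists (x : 'rV[R]_n) (y w : 'rV[R]_m), y != w /\
       r = ((`|u (pt x y) - u (pt x w)|) / (enorm (y - w)) `^ s)%:E]).

Definition Linf_on (O : set 'rV[R]_(n + m)) (u : 'rV[R]_(n + m) -> R) : \bar R :=
  ereal_sup [set (`|u p|)%:E | p in O].

Definition Lambda_inf (O : set 'rV[R]_(n + m)) (s : R) : \bar R :=
  ereal_inf [set Wseminorm s u | u in
    [set u : 'rV[R]_(n + m) -> R |
      [/\ (exists M : R, forall p, `|u p| <= M),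
          (Wseminorm s u < +oo)%E,
          Linf_on O u = 1%E &
          forall p, ~ O p -> u p = 0]]].

Definition R_s (O : set 'rV[R]_(n + m)) (s : R) : R :=
  sup [set d | exists (x : 'rV[R]_n) (y : 'rV[R]_m), O (pt x y) /\
       d = inf [set t | exists (z : 'rV[R]_n) (w : 'rV[R]_m), bdry O (pt z w) /\
                  t = (enorm (x - z)) `^ s + (enorm (y - w)) `^ s]].

End Defs.

From HB Require Import structures.
From mathcomp Require Import all_boot all_order all_algebra.
From mathcomp Require Import all_classical all_reals all_analysis.
From mathcomp Require Import ring lra.
Import Order.TTheory GRing.Theory Num.Theory.
Import numFieldNormedType.Exports.
Local Open Scope classical_set_scope.
Local Open Scope ring_scope.
Set Implicit Arguments. Unset Strict Implicit. Unset Printing Implicit Defensive.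

(* Write [bdist x y] for the anisotropic distance inf_{(z,w) in bdry Omega}
   (|x - z|^s + |y - w|^s), so that R_s is its supremum over Omega.  As
   t |-> t^s is subadditive for s <= 1, the gauge |x - z|^s + |y - w|^s
   satisfies the triangle inequality and [bdist] is 1-Lipschitz for it; since
   every segment from a point of Omega to a point outside crosses the boundary,
   [bdist] extended by 0 outside Omega stays 1-Lipschitz.  So [bdist / R_s] is
   admissible with seminorm at most 1/R_s.  Conversely, an admissible u with
   seminorm at most c vanishes on the boundary, hence |u| <= c bdist <= c R_s
   on Omega, and ||u||_oo = 1 forces c >= 1/R_s. *)


Section EuclideanNorm.
Variables (R : realType) (N : nat).
Implicit Types (a b : 'rV[R]_N).

Lemma edot_ge0 a : 0 <= edot a a.
Proof. by apply: sumr_ge0 => i _; rewrite -expr2 sqr_ge0. Qed.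

Lemma enorm_ge0 a : 0 <= enorm a.
Proof. exact: sqrtr_ge0. Qed.

Lemma enorm_sqr a : enorm a ^+ 2 = edot a a.
Proof. by rewrite sqr_sqrtr // edot_ge0. Qed.

Lemma enorm_coord a i : `|a 0 i| <= enorm a.
Proof.
rewrite -sqrtr_sqr /enorm ler_sqrt ?edot_ge0 // /edot (bigD1 i) //= expr2.
by rewrite lerDl; apply: sumr_ge0 => j _; rewrite -expr2 sqr_ge0.
Qed.

Lemma enormZ t a : enorm (t *: a) = `|t| * enorm a.
Proof.
rewrite /enorm /edot.
have -> : \sum_(i < N) (t *: a) 0 i * (t *: a) 0 i =
    t ^+ 2 * \sum_(i < N) a 0 i * a 0 i.
  by rewrite mulr_sumr; apply: eq_bigr => i _; rewrite !mxE; ring.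
by rewrite sqrtrM ?sqr_ge0 // sqrtr_sqr.
Qed.

Lemma enorm0 : enorm (0 : 'rV[R]_N) = 0.
Proof. by rewrite -(scale0r (0 : 'rV[R]_N)) enormZ normr0 mul0r. Qed.

Lemma enormN a : enorm (- a) = enorm a.
Proof. by rewrite -scaleN1r enormZ normrN1 mul1r. Qed.

Lemma enormB a b : enorm (a - b) = enorm (b - a).
Proof. by rewrite -enormN opprB. Qed.

Lemma enorm_eq0 a : enorm a = 0 -> a = 0.
Proof.
move=> a0; apply/rowP => i; rewrite mxE; apply/eqP; rewrite -normr_le0 -a0.
exact: enorm_coord.
Qed.

Lemma enorm_gt0 a : a != 0 -> 0 < enorm a.
Proof.
move=> a0; rewrite lt_neqAle enorm_ge0 andbT.
by apply: contra_neq a0 => /esym/enorm_eq0.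
Qed.

Lemma edot_sqrZB a b (A B : R) :
  edot (B *: a - A *: b) (B *: a - A *: b) =
  B ^+ 2 * edot a a - 2 * A * B * edot a b + A ^+ 2 * edot b b.
Proof.
rewrite /edot.
have -> : \sum_(i < N) (B *: a - A *: b) 0 i * (B *: a - A *: b) 0 i =
  \sum_(i < N) (B ^+ 2 * (a 0 i * a 0 i) - 2 * A * B * (a 0 i * b 0 i)
     + A ^+ 2 * (b 0 i * b 0 i)).
  by apply: eq_bigr => i _; rewrite !mxE; ring.
by rewrite big_split /= sumrB -!mulr_sumr.
Qed.

Lemma edot_sqrD a b : edot (a + b) (a + b) = edot a a + 2 * edot a b + edot b b.
Proof.
rewrite /edot.
have -> : \sum_(i < N) (a + b) 0 i * (a + b) 0 i =
  \sum_(i < N) (a 0 i * a 0 i + 2 * (a 0 i * b 0 i) + b 0 i * b 0 i).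
  by apply: eq_bigr => i _; rewrite !mxE; ring.
by rewrite !big_split /= -mulr_sumr.
Qed.

Lemma cauchy_schwarz a b : edot a b <= enorm a * enorm b.
Proof.
have [->|a0] := eqVneq a 0.
  by rewrite /edot big1 ?enorm0 ?mul0r // => i _; rewrite mxE mul0r.
have [->|b0] := eqVneq b 0.
  by rewrite /edot big1 ?enorm0 ?mulr0 // => i _; rewrite mxE mulr0.
have := edot_ge0 (enorm b *: a - enorm a *: b).
rewrite edot_sqrZB -!enorm_sqr.
have := mulr_gt0 (enorm_gt0 a0) (enorm_gt0 b0); nra.
Qed.

Lemma enormD a b : enorm (a + b) <= enorm a + enorm b.
Proof.
rewrite -(ler_pXn2r (_ : (0 < 2)%N)) ?nnegrE ?addr_ge0 ?enorm_ge0 //.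
rewrite enorm_sqr edot_sqrD -!enorm_sqr.
have := cauchy_schwarz a b; nra.
Qed.

Lemma enorm_segment_le (x z : 'rV[R]_N) (t : R) : 0 <= t <= 1 ->
  enorm (x - (x + t *: (z - x))) <= enorm (x - z).
Proof.
move=> /andP[t0 t1]; rewrite opprD addrA subrr add0r enormN enormZ ger0_norm //.
by rewrite enormB ler_piMl ?enorm_ge0.
Qed.

End EuclideanNorm.

Section RowBlocks.
Variables (R : realType) (n m : nat) (x : 'rV[R]_n) (y : 'rV[R]_m).

Lemma edot_row_mx : edot (row_mx x y) (row_mx x y) = edot x x + edot y y.
Proof.
rewrite /edot big_split_ord /=; congr (_ + _); apply: eq_bigr => i _.
  by rewrite row_mxEl.
by rewrite row_mxEr.
Qed.

Lemma enorm_row_mxl : enorm x <= enorm (row_mx x y).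
Proof. by rewrite /enorm ler_sqrt ?edot_ge0 // edot_row_mx lerDl edot_ge0. Qed.

Lemma enorm_row_mxr : enorm y <= enorm (row_mx x y).
Proof. by rewrite /enorm ler_sqrt ?edot_ge0 // edot_row_mx lerDr edot_ge0. Qed.

End RowBlocks.

Lemma pt_segment (R : realType) n m (x z : 'rV[R]_n) (y w : 'rV[R]_m) (t : R) :
  pt x y + t *: (pt z w - pt x y) = pt (x + t *: (z - x)) (y + t *: (w - y)).
Proof. by rewrite /pt opp_row_mx !add_row_mx scale_row_mx add_row_mx. Qed.

Lemma ball_pt (R : realType) n m (x z : 'rV[R]_n) (y w : 'rV[R]_m) (r : R) :
  enorm (x - z) < r -> enorm (y - w) < r -> ball (pt x y) r (pt z w).
Proof.
move=> xz yw; have r0 : 0 < r by exact: le_lt_trans (enorm_ge0 _) xz.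
split=> // i j; rewrite /ball /= (ord1 i).
have -> : pt x y 0 j - pt z w 0 j = (pt x y - pt z w) 0 j by rewrite !mxE.
rewrite /pt opp_row_mx add_row_mx -(splitK j).
case: (fintype.split j) => k /=; [rewrite row_mxEl | rewrite row_mxEr].
  exact: le_lt_trans (enorm_coord _ _) xz.
exact: le_lt_trans (enorm_coord _ _) yw.
Qed.

Lemma pt_split (R : realType) n m (p : 'rV[R]_(n + m)) :
  p = pt (lsubmx p) (rsubmx p).
Proof. by rewrite /pt hsubmxK. Qed.

Section Powers.
Variable R : realType.

Lemma ler_powR2r (r a b : R) : 0 <= r -> 0 <= a -> a <= b -> a `^ r <= b `^ r.
Proof.
move=> r0 a0 ab; apply: ge0_ler_powR; rewrite ?nnegrE //; exact: le_trans ab.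
Qed.

Lemma ler_powR2r_le0 (r a b : R) : r <= 0 -> 0 < a -> a <= b -> b `^ r <= a `^ r.
Proof.
move=> r0 a0 ab; rewrite -[r]opprK !(powRN _ (- r)).
rewrite lef_pV2 ?posrE ?powR_gt0 ?(lt_le_trans a0 ab) //.
by apply: ler_powR2r; rewrite ?oppr_ge0 // ltW.
Qed.

Lemma powRD_le (s a b : R) : 0 < s -> s <= 1 -> 0 <= a -> 0 <= b ->
  (a + b) `^ s <= a `^ s + b `^ s.
Proof.
move=> s0 s1 a0 b0.
(* (a + b)^s = a (a + b)^(s-1) + b (a + b)^(s-1), and t^(s-1) decreases. *)
have mul_powR_le c : 0 <= c -> c <= a + b -> c * (a + b) `^ (s - 1) <= c `^ s.
  move=> c0 cab; rewrite -(mulr_powRB1 c0 s0).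
  have [->|c_neq0] := eqVneq c 0; first by rewrite !mul0r.
  apply: ler_wpM2l => //; apply: ler_powR2r_le0 => //; first by rewrite subr_le0.
  by rewrite lt_neqAle eq_sym c_neq0.
rewrite -(mulr_powRB1 (addr_ge0 a0 b0) s0) mulrDl.
by apply: lerD; apply: mul_powR_le; rewrite ?lerDl ?lerDr.
Qed.

End Powers.

Lemma ler_mul_inf (R : realType) (S : set R) (a c : R) :
  S !=set0 -> has_lbound S -> (forall t, S t -> a <= c * t) -> a <= c * inf S.
Proof.
move=> [t0 St0] S_lb acS; have [c_gt0|c_le0] := ltP 0 c.
  rewrite mulrC -ler_pdivrMr //; apply: lb_le_inf; first by exists t0.
  by move=> t St; rewrite ler_pdivrMr // mulrC; exact: acS.
by apply: le_trans (acS _ St0) _; rewrite ler_wnM2l //; exact: ge_inf.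
Qed.

Lemma lee_fin_lbound (R : realType) (r : R) (e : \bar R) :
  (forall c : R, (e <= c%:E)%E -> r <= c) -> (r%:E <= e)%E.
Proof.
case: e => [c| |] rc; [by rewrite lee_fin; exact: rc | exact: leey |].
by move: (rc (r - 1)%R (leNye _)) => ?; exfalso; lra.
Qed.

Section Boundary.
Variables (R : realType) (N : nat) (O : set 'rV[R]_N).
Hypothesis Oo : open O.

Lemma bdry_notin q : bdry O q -> ~ O q.
Proof. by move=> [_ Oq]; rewrite (proj1 (interior_id O) Oo) in Oq. Qed.

(* [t] is the first exit time [inf {t in [0, 1] | p + t (q - p) \notin O}]. *)
Lemma segment_meets_bdry p q : O p -> ~ O q ->
  exists2 t, 0 <= t <= 1 & bdry O (p + t *: (q - p)).
Proof.
move=> Op Oq; pose f t : 'rV[R]_N := p + t *: (q - p).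
have f0 : f 0 = p by rewrite /f scale0r addr0.
have fC t : f x @[x --> t] --> f t.
  by apply: cvgD; [exact: cvg_cst | apply: cvgZr_tmp; exact: cvg_id].
pose S := [set t | 0 <= t <= 1 /\ ~ O (f t)].
have S1 : S 1.
  by split; [rewrite ler01 lexx | rewrite /f scale1r addrCA subrr addr0].
have S_lb : has_lbound S by exists 0 => t [/andP[]].
set T := inf S.
have T0 : 0 <= T by apply: lb_le_inf; [exists 1 | move=> t [/andP[]]].
have T1 : T <= 1 by exact: ge_inf.
have O_before t : 0 <= t < T -> O (f t).
  move=> /andP[t0 tT]; apply: contrapT => Oft.
  have : T <= t.
    by apply: ge_inf => //; split; rewrite ?t0 ?(ltW (lt_le_trans tT T1)).
  by rewrite leNgt tT.
exists T; first by rewrite T0 T1.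
split=> [B /fC /nbhs_ballP[d d0 fB]|].
  have [T_eq0|T_neq0] := eqVneq T 0.
    by exists p; split=> //; rewrite -f0 -T_eq0; apply: fB; exact: ballxx.
  pose t := Num.max 0 (T - d / 2).
  have t0 : 0 <= t by rewrite le_max lexx.
  have tT : t < T.
    by rewrite gt_max lt_neqAle eq_sym T_neq0 T0 ltrBlDr ltrDl divr_gt0.
  exists (f t); split; first by apply: O_before; rewrite t0 tT.
  apply: fB; rewrite /ball /= gtr0_norm ?subr_gt0 //.
  have : T - d / 2 <= t by rewrite le_max lexx orbT.
  have : 0 < d by []; lra.
rewrite (proj1 (interior_id O) Oo) => OfT.
have /nbhs_ballP[d d0 fO] := fC T O (open_nbhs_nbhs (conj Oo OfT)).
have [t [t01 Oft] tTd] := inf_adherent d0 (conj (ex_intro _ 1 S1) S_lb).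
have Tt : T <= t := ge_inf S_lb (conj t01 Oft).
apply: Oft; apply: fO; rewrite /ball /= ler0_norm ?subr_le0 //.
by rewrite opprB ltrBlDl.
Qed.

Lemma bdry_neq0 : (0 < N)%N -> O !=set0 -> ebounded O -> bdry O !=set0.
Proof.
move=> N_gt0 [p Op] [M OM].
pose i := Ordinal N_gt0; pose q : 'rV[R]_N := (`|M| + 1) *: delta_mx 0 i.
have Oq : ~ O q.
  move=> /OM; apply/negP; rewrite -ltNge (lt_le_trans _ (enorm_coord q i)) //.
  rewrite !mxE !eqxx mulr1 ger0_norm ?addr_ge0 //.
  by rewrite (le_lt_trans (ler_norm M)) ?ltrDl.
by have [t _ qb] := segment_meets_bdry Op Oq; exists (p + t *: (q - p)).
Qed.

End Boundary.

Section AnisotropicDistance.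
Variables (R : realType) (n m : nat) (s : R).
Hypotheses (s_gt0 : 0 < s) (s_le1 : s <= 1).

Definition adist (x : 'rV[R]_n) (y : 'rV[R]_m) (z : 'rV[R]_n) (w : 'rV[R]_m) : R :=
  enorm (x - z) `^ s + enorm (y - w) `^ s.

Lemma adist_ge0 x y z w : 0 <= adist x y z w.
Proof. by rewrite addr_ge0 ?powR_ge0. Qed.

Lemma adistC x y z w : adist x y z w = adist z w x y.
Proof. by rewrite /adist enormB [enorm (y - w)]enormB. Qed.

Lemma adist_eq_snd x z y : adist x y z y = enorm (x - z) `^ s.
Proof. by rewrite /adist subrr enorm0 powR0 ?gt_eqF // addr0. Qed.

Lemma adist_eq_fst x y w : adist x y x w = enorm (y - w) `^ s.
Proof. by rewrite /adist subrr enorm0 powR0 ?gt_eqF // add0r. Qed.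

Lemma powR_enorm_triangle N (a b c : 'rV[R]_N) :
  enorm (a - c) `^ s <= enorm (a - b) `^ s + enorm (b - c) `^ s.
Proof.
apply: le_trans (powRD_le s_gt0 s_le1 (enorm_ge0 _) (enorm_ge0 _)).
apply: ler_powR2r; [exact: ltW | exact: enorm_ge0 |].
by have := enormD (a - b) (b - c); rewrite addrA subrK.
Qed.

Lemma adist_triangle x y x' y' z w :
  adist x y z w <= adist x y x' y' + adist x' y' z w.
Proof.
rewrite /adist addrACA.
by apply: lerD; apply: powR_enorm_triangle.
Qed.

Lemma Wseminorm_leP (u : 'rV[R]_(n + m) -> R) (c : R) :
  (Wseminorm s u <= c%:E)%E <->
  forall x y z w, `|u (pt x y) - u (pt z w)| <= c * adist x y z w.
Proof.
have enorm_powR_gt0 N (a b : 'rV[R]_N) : a != b -> 0 < enorm (a - b) `^ s.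
  by move=> ab; rewrite powR_gt0 // enorm_gt0 // subr_eq0.
split=> [|uc]; last first.
  rewrite /Wseminorm ge_max; apply/andP; split; apply: ge_ereal_sup.
    move=> _ [x [z [y [xz ->]]]]; rewrite lee_fin ler_pdivrMr ?enorm_powR_gt0 //.
    by rewrite -(adist_eq_snd _ _ y); apply: uc.
  move=> _ [x [y [w [yw ->]]]]; rewrite lee_fin ler_pdivrMr ?enorm_powR_gt0 //.
  by rewrite -(adist_eq_fst x); apply: uc.
rewrite /Wseminorm ge_max => /andP[ucx ucy] x y z w.
have holder_x : `|u (pt x y) - u (pt z y)| <= c * enorm (x - z) `^ s.
  have [<-|xz] := eqVneq x z.
    by rewrite !subrr enorm0 powR0 ?gt_eqF // normr0 mulr0.
  rewrite -ler_pdivrMr ?enorm_powR_gt0 // -lee_fin (le_trans _ ucx) //.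
  by apply: ereal_sup_ubound; exists x, z, y.
have holder_y : `|u (pt z y) - u (pt z w)| <= c * enorm (y - w) `^ s.
  have [<-|yw] := eqVneq y w.
    by rewrite !subrr enorm0 powR0 ?gt_eqF // normr0 mulr0.
  rewrite -ler_pdivrMr ?enorm_powR_gt0 // -lee_fin (le_trans _ ucy) //.
  by apply: ereal_sup_ubound; exists z, y, w.
rewrite -(subrK (u (pt z y)) (u (pt x y))) -addrA /adist mulrDr.
exact: le_trans (ler_normD _ _) (lerD holder_x holder_y).
Qed.

End AnisotropicDistance.

Section BoundaryDistance.
Variables (R : realType) (n m : nat) (s : R) (O : set 'rV[R]_(n + m)).
Hypotheses (s_gt0 : 0 < s) (s_le1 : s <= 1) (Oo : open O) (bdO : bdry O !=set0).

Definition bdist x y :=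
  inf [set t | exists z w, bdry O (pt z w) /\ t = adist s x y z w].

Let bdist_set_neq0 x y :
  [set t | exists z w, bdry O (pt z w) /\ t = adist s x y z w] !=set0.
Proof.
have [q bq] := bdO; rewrite [q]pt_split in bq.
by exists (adist s x y (lsubmx q) (rsubmx q)), (lsubmx q), (rsubmx q).
Qed.

Let bdist_set_lbound x y :
  has_lbound [set t | exists z w, bdry O (pt z w) /\ t = adist s x y z w].
Proof. by exists 0 => _ [z [w [_ ->]]]; exact: adist_ge0. Qed.

Lemma bdist_le x y z w : bdry O (pt z w) -> bdist x y <= adist s x y z w.
Proof. by move=> bzw; apply: ge_inf => //; exists z, w. Qed.

Lemma ler_mul_bdist a c x y :
  (forall z w, bdry O (pt z w) -> a <= c * adist s x y z w) -> a <= c * bdist x y.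
Proof. by move=> acb; apply: ler_mul_inf => // _ [z [w [b ->]]]; exact: acb. Qed.

Lemma bdist_ge0 x y : 0 <= bdist x y.
Proof. by apply: lb_le_inf => // _ [z [w [_ ->]]]; exact: adist_ge0. Qed.

Lemma bdist_lipschitz x y z w : bdist x y <= bdist z w + adist s x y z w.
Proof.
rewrite -lerBlDr; apply: lb_le_inf => // _ [z' [w' [b ->]]].
rewrite lerBlDr (le_trans (bdist_le x y b)) // addrC.
exact: adist_triangle.
Qed.

Lemma bdist_le_outside x y z w : O (pt x y) -> ~ O (pt z w) ->
  bdist x y <= adist s x y z w.
Proof.
move=> Oxy Ozw; have [t t01] := segment_meets_bdry Oo Oxy Ozw.
rewrite pt_segment => /(bdist_le x y) /le_trans; apply.
apply: lerD; apply: ler_powR2r;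
  by rewrite ?enorm_ge0 ?enorm_segment_le ?(ltW s_gt0).
Qed.

Lemma bdist_gt0 x y : O (pt x y) -> 0 < bdist x y.
Proof.
move=> Oxy; have /nbhs_ballP[r r_gt0 ballO] : nbhs (pt x y) O.
  exact: open_nbhs_nbhs.
apply: (lt_le_trans (powR_gt0 s r_gt0)); apply: lb_le_inf => // _ [z [w [b ->]]].
have [rxz|xzr] := leP r (enorm (x - z)).
  apply: le_trans (ler_powR2r (ltW s_gt0) (ltW r_gt0) rxz) _.
  by rewrite lerDl powR_ge0.
have [ryw|ywr] := leP r (enorm (y - w)).
  apply: le_trans (ler_powR2r (ltW s_gt0) (ltW r_gt0) ryw) _.
  by rewrite lerDr powR_ge0.
by exfalso; apply: (bdry_notin Oo b); apply: ballO; exact: ball_pt.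
Qed.

Definition bdist_in (p : 'rV[R]_(n + m)) : R :=
  if `[< O p >] then bdist (lsubmx p) (rsubmx p) else 0.

Lemma bdist_in_pt x y :
  bdist_in (pt x y) = if `[< O (pt x y) >] then bdist x y else 0.
Proof. by rewrite /bdist_in /pt row_mxKl row_mxKr. Qed.

Lemma bdist_in_holder x y z w :
  `|bdist_in (pt x y) - bdist_in (pt z w)| <= adist s x y z w.
Proof.
rewrite !bdist_in_pt; case: asboolP => Oxy; case: asboolP => Ozw.
- by rewrite ler_distl lerBlDr bdist_lipschitz andbT adistC bdist_lipschitz.
- by rewrite subr0 ger0_norm ?bdist_ge0 ?bdist_le_outside.
- by rewrite sub0r normrN ger0_norm ?bdist_ge0 // adistC bdist_le_outside.
- by rewrite subrr normr0 adist_ge0.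
Qed.

End BoundaryDistance.

Section ExtremalFunction.
Variables (R : realType) (n m : nat) (s : R) (O : set 'rV[R]_(n + m)).
Hypotheses (s_gt0 : 0 < s) (s_le1 : s <= 1) (Oo : open O) (bdO : bdry O !=set0).
Hypotheses (O_neq0 : O !=set0) (O_bounded : ebounded O).

Let bdist_values := [set d | exists x y, O (pt x y) /\ d = bdist s O x y].

Let R_sE : R_s O s = sup bdist_values.
Proof. by []. Qed.

Let bdist_values_has_sup : has_sup bdist_values.
Proof.
split.
  have [p Op] := O_neq0; rewrite [p]pt_split in Op.
  by exists (bdist s O (lsubmx p) (rsubmx p)), (lsubmx p), (rsubmx p).
have [M OM] := O_bounded; have [q bq] := bdO; rewrite [q]pt_split in bq.
set z := lsubmx q in bq; set w := rsubmx q in bq.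
exists ((M + enorm z) `^ s + (M + enorm w) `^ s) => _ [x [y [Oxy ->]]].
apply: le_trans (bdist_le s x y bq) _.
have enormB_le N (a b : 'rV[R]_N) : enorm a <= M -> enorm (a - b) <= M + enorm b.
  by move=> aM; rewrite (le_trans (enormD _ _)) // enormN lerD2r.
apply: lerD; apply: ler_powR2r; rewrite ?(ltW s_gt0) ?enorm_ge0 ?enormB_le //.
  exact: le_trans (enorm_row_mxl x y) (OM _ Oxy).
exact: le_trans (enorm_row_mxr x y) (OM _ Oxy).
Qed.

Lemma bdist_le_R_s x y : O (pt x y) -> bdist s O x y <= R_s O s.
Proof.
by move=> Oxy; rewrite R_sE; apply: sup_upper_bound => //; exists x, y.
Qed.

Lemma R_s_gt0 : 0 < R_s O s.
Proof.
have [p Op] := O_neq0; rewrite [p]pt_split in Op.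
exact: lt_le_trans (bdist_gt0 s_gt0 Oo bdO Op) (bdist_le_R_s Op).
Qed.

Definition extremal (p : 'rV[R]_(n + m)) : R := bdist_in s O p / R_s O s.

Lemma extremal_Wseminorm : (Wseminorm s extremal <= ((R_s O s)^-1)%:E)%E.
Proof.
have Rinv_gt0 : 0 < (R_s O s)^-1 by rewrite invr_gt0 R_s_gt0.
apply/(Wseminorm_leP s_gt0) => x y z w.
rewrite /extremal -mulrBl normrM (gtr0_norm Rinv_gt0) mulrC ler_pM2l //.
exact: bdist_in_holder.
Qed.

Lemma extremal_notin p : ~ O p -> extremal p = 0.
Proof. by move=> Op; rewrite /extremal /bdist_in asboolF ?mul0r. Qed.

Lemma extremal_in p :
  O p -> `|extremal p| = bdist s O (lsubmx p) (rsubmx p) / R_s O s.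
Proof.
move=> Op; rewrite /extremal /bdist_in asboolT //.
by rewrite ger0_norm // divr_ge0 ?bdist_ge0 ?(ltW R_s_gt0).
Qed.

Lemma extremal_le1 p : `|extremal p| <= 1.
Proof.
have [Op|Op] := asboolP (O p); last by rewrite extremal_notin // normr0.
rewrite extremal_in // ler_pdivrMr ?R_s_gt0 // mul1r.
by apply: bdist_le_R_s; rewrite -pt_split.
Qed.

Lemma extremal_Linf : Linf_on O extremal = 1%E.
Proof.
apply/eqP; rewrite eq_le; apply/andP; split.
  by apply: ge_ereal_sup => _ [p Op <-]; rewrite lee_fin extremal_le1.
have extremal_ub (c : R) :
    (Linf_on O extremal <= c%:E)%E -> R_s O s <= c * R_s O s.
  move=> extremal_c; rewrite {1}R_sE.
  apply: ge_sup; first by case: bdist_values_has_sup.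
  move=> _ [x [y [Oxy ->]]].
  rewrite -ler_pdivrMr ?R_s_gt0 // -lee_fin (le_trans _ extremal_c) //.
  apply: ereal_sup_ubound; exists (pt x y) => //.
  by rewrite extremal_in /pt ?row_mxKl ?row_mxKr.
apply: lee_fin_lbound => c /extremal_ub.
by rewrite -{1}(mul1r (R_s O s)) ler_pM2r ?R_s_gt0.
Qed.

Section LowerBound.
Variables (u : 'rV[R]_(n + m) -> R) (c : R).
Hypotheses (u_notin : forall p, ~ O p -> u p = 0)
  (u_holder : (Wseminorm s u <= c%:E)%E).

Lemma holder_le_bdist x y : O (pt x y) -> `|u (pt x y)| <= c * bdist s O x y.
Proof.
move=> Oxy; apply: ler_mul_bdist => // z w bzw.
have := proj1 (Wseminorm_leP s_gt0 u c) u_holder x y z w.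
by rewrite (u_notin (bdry_notin Oo bzw)) subr0.
Qed.

Lemma R_s_inv_le : Linf_on O u = 1%E -> (R_s O s)^-1 <= c.
Proof.
move=> u_Linf.
have c_ge0 : 0 <= c.
  have [p Op] := O_neq0; rewrite [p]pt_split in Op.
  rewrite -(pmulr_lge0 _ (bdist_gt0 s_gt0 Oo bdO Op)).
  exact: le_trans (normr_ge0 _) (holder_le_bdist Op).
have : 1 <= c * R_s O s.
  rewrite -lee_fin -u_Linf; apply: ge_ereal_sup => _ [p Op <-].
  rewrite lee_fin [p]pt_split; rewrite [p]pt_split in Op.
  apply: le_trans (holder_le_bdist Op) _; apply: ler_wpM2l => //.
  exact: bdist_le_R_s.
by rewrite -[_^-1]mul1r ler_pdivrMr ?R_s_gt0.
Qed.

End LowerBound.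

End ExtremalFunction.

Theorem lemma5p1 (R : realType) (n m : nat) (hn : (0 < n)%N) (hm : (0 < m)%N)
  (Omega : set 'rV[R]_(n + m)) (s : R) :
  lipschitz_domain Omega -> 0 < s < 1 ->
  Lambda_inf Omega s = ((R_s Omega s)^-1)%:E.
Proof.
case=> Omega_neq0 Omega_open _ Omega_bounded _ /andP[s_gt0 /ltW s_le1].
have bdO : bdry Omega !=set0.
  by apply: bdry_neq0 => //; rewrite addn_gt0 hn.
apply/eqP; rewrite eq_le; apply/andP; split.
- have W_extremal :=
    extremal_Wseminorm s_gt0 s_le1 Omega_open bdO Omega_neq0 Omega_bounded.
  apply: (le_trans (ereal_inf_lbound _) W_extremal).
  exists (extremal s Omega) => //; split.
  + by exists 1; exact: extremal_le1.
  + exact: le_lt_trans W_extremal (ltry _).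
  + exact: extremal_Linf.
  + exact: extremal_notin.
- apply: le_ereal_inf_tmp => _ [u [_ _ u_Linf u_notin] <-].
  by apply: lee_fin_lbound => c u_holder; exact: R_s_inv_le u_holder u_Linf.
Qed.
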